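(* Under the standing assumptions, if $a<1/4$ then $\lim_{\theta\to\pi^-}g_m(\theta)$ has sign $(-1)^m$.
   Context: Standing assumptions: $a,b\in\mathbb{R}$ with $b>0$, $1+a+b>0$, $9-27a+b>0$, $2-8a+8a^2+ab\ne0$, $b+1-a\ne0$. Let $f^*(\zeta,\theta)=(\zeta+2\cos\theta)(2\zeta\cos\theta+1)+b\zeta-a(\zeta+2\cos\theta)^3$. Under these assumptions, for each $\theta\in(\pi/2,\pi)$ the polynomial $f^*(\cdot,\theta)$ has exactly one real zero in $(-1,1)$; denote it $w(\theta)$ and set $\zeta(\theta)=1/w(\theta)$. Define $$g_m(\theta)=\frac{(\zeta(\theta)-\cos\theta)\sin((m+1)\theta)}{\sin\theta}-\cos((m+1)\theta)+\frac{1}{\zeta(\theta)^{m+1}}.$$ *)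

From Stdlib Require Import Reals.
Open Scope R_scope.

Definition fstar (a b zeta theta : R) : R :=
  (zeta + 2 * cos theta) * (2 * zeta * cos theta + 1) + b * zeta
  - a * (zeta + 2 * cos theta) ^ 3.

Definition standing (a b : R) : Prop :=
  0 < b /\ 1 + a + b > 0 /\ 9 - 27 * a + b > 0 /\
  2 - 8 * a + 8 * a ^ 2 + a * b <> 0 /\ b + 1 - a <> 0.

(* w is the (unique, under the standing assumptions) real zero of
   fstar a b . theta in (-1,1), for every theta in (pi/2, pi). *)
Definition is_root_selector (a b : R) (w : R -> R) : Prop :=
  forall theta, PI / 2 < theta < PI ->
    -1 < w theta < 1 /\ fstar a b (w theta) theta = 0.

Definition g (w : R -> R) (m : nat) (theta : R) : R :=
  let zeta := 1 / w theta in
  (zeta - cos theta) * sin (INR (m + 1) * theta) / sin theta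
  - cos (INR (m + 1) * theta) + 1 / zeta ^ (m + 1).

(* At theta = pi the equation f*(w, theta) = 0 becomes p(w) = 0 for the cubic
   [fstar_pi].  It has a root w0 in (0,1), and when a < 1/4 its difference
   quotient on [-1,1]^2 is bounded below by a positive constant; since
   f*(w, theta) - p(w) = O(1 + cos theta), this forces |w(theta) - w0| =
   O(1 + cos theta), so w(theta) -> w0 as theta -> pi.  Writing
   sin((m+1)theta) / sin theta = U_m(cos theta) with the Chebyshev polynomial
   of the second kind, g_m becomes continuous in (cos theta, w(theta)), so its
   limit is (-1)^m ((m+1)(1/w0 + 1) + 1) + w0^(m+1), which has the sign of
   (-1)^m because 0 < w0 < 1. *)

From Stdlib Require Import Reals Lra Psatz.
Open Scope R_scope.

Lemma limit1_comp_continuity (h f : R -> R) (D : R -> Prop) (l x0 : R) :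
  continuity_pt h l -> limit1_in f D l x0 ->
  limit1_in (fun x => h (f x)) D (h l) x0.
Proof.
  intros Hh Hf eps Heps.
  destruct (Hh eps Heps) as [delta1 [Hdelta1 Hnear1]].
  destruct (Hf delta1 Hdelta1) as [delta2 [Hdelta2 Hnear2]].
  exists delta2; split; [exact Hdelta2|].
  intros x [Dx Hx].
  destruct (Req_dec (f x) l) as [Efx|Nfx].
  - rewrite Efx; simpl; rewrite R_dist_eq; lra.
  - apply Hnear1; split; [split; [exact I | auto] | apply Hnear2; auto].
Qed.

Lemma cos_INR_mul_PI (n : nat) : cos (INR n * PI) = (-1) ^ n.
Proof.
  induction n as [|n IH].
  - simpl; rewrite Rmult_0_l, cos_0; ring.
  - rewrite S_INR, Rmult_plus_distr_r, Rmult_1_l, neg_cos, IH; simpl; ring.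
Qed.

Fixpoint cheb2 (k : nat) (c : R) : R :=
  match k with
  | O => 1
  | S O => 2 * c
  | S ((S k') as k1) => 2 * c * cheb2 k1 c - cheb2 k' c
  end.

Lemma sin_INR_mul_cheb2 (k : nat) (t : R) :
  sin (INR (k + 1) * t) = sin t * cheb2 k (cos t).
Proof.
  enough (Hpair : forall k, sin (INR (k + 1) * t) = sin t * cheb2 k (cos t) /\
                            sin (INR (k + 2) * t) = sin t * cheb2 (S k) (cos t))
    by apply Hpair.
  clear k; induction k as [|k [IH1 IH2]].
  - split.
    + simpl; rewrite Rmult_1_l; ring.
    + replace (INR (0 + 2) * t) with (t + t) by (simpl; ring).
      rewrite sin_plus; simpl; ring.
  - split.
    + now replace (S k + 1)%nat with (k + 2)%nat by lia.
    + change (cheb2 (S (S k)) (cos t))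
        with (2 * cos t * cheb2 (S k) (cos t) - cheb2 k (cos t)).
      replace (INR (S k + 2) * t) with (INR (k + 2) * t + t)
        by (change (S k + 2)%nat with (S (k + 2)); rewrite S_INR; ring).
      replace (INR (k + 1) * t) with (INR (k + 2) * t - t) in IH1
        by (rewrite !plus_INR; simpl; ring).
      rewrite sin_minus in IH1; rewrite sin_plus.
      rewrite Rmult_minus_distr_l, <- IH1.
      replace (sin t * (2 * cos t * cheb2 (S k) (cos t)))
        with (2 * cos t * (sin t * cheb2 (S k) (cos t))) by ring.
      rewrite <- IH2; ring.
Qed.

Lemma cheb2_m1 (k : nat) : cheb2 k (-1) = (-1) ^ k * INR (k + 1).
Proof.
  enough (Hpair : forall k, cheb2 k (-1) = (-1) ^ k * INR (k + 1) /\
                            cheb2 (S k) (-1) = (-1) ^ S k * INR (k + 2))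
    by apply Hpair.
  clear k; induction k as [|k [IH1 IH2]].
  - simpl; split; ring.
  - split.
    + now replace (S k + 1)%nat with (k + 2)%nat by lia.
    + change (cheb2 (S (S k)) (-1)) with (2 * (-1) * cheb2 (S k) (-1) - cheb2 k (-1)).
      rewrite IH1, IH2, !plus_INR, !S_INR; simpl; ring.
Qed.

Lemma continuity_cheb2 (k : nat) : continuity (cheb2 k).
Proof.
  assert (Hlin : continuity (fun c => 2 * c)).
  { apply continuity_scal, derivable_continuous, derivable_id. }
  enough (Hpair : forall k, continuity (cheb2 k) /\ continuity (cheb2 (S k)))
    by apply Hpair.
  clear k; induction k as [|k [IH1 IH2]].
  - split; [apply continuity_const; intros x y; reflexivity | exact Hlin].
  - split; [exact IH2|].
    change (cheb2 (S (S k))) with (fun c => 2 * c * cheb2 (S k) c - cheb2 k c).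
    apply continuity_minus; [apply (continuity_mult (fun c => 2 * c))|]; assumption.
Qed.

(* [fstar a b x theta] evaluated at [cos theta = -1]. *)
Definition fstar_pi (a b x : R) : R :=
  - a * (x - 2) ^ 3 + (x - 2) * (1 - 2 * x) + b * x.

Definition fstar_pi_dq (a b x y : R) : R :=
  - a * (x ^ 2 + x * y + y ^ 2) + (6 * a - 2) * (x + y) + (5 - 12 * a + b).

Lemma fstar_pi_sub (a b x y : R) :
  fstar_pi a b x - fstar_pi a b y = (x - y) * fstar_pi_dq a b x y.
Proof. unfold fstar_pi, fstar_pi_dq; ring. Qed.

Lemma fstar_pi_dq_lower_bound (a b x y : R) :
  standing a b -> a < 1 / 4 -> -1 <= x <= 1 -> -1 <= y <= 1 ->
  Rmin (1 / 4) (9 - 27 * a + b) <= fstar_pi_dq a b x y.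
Proof.
  intros [Hb [_ [H9 _]]] Ha Hx Hy.
  set (mu := Rmin (1 / 4) (9 - 27 * a + b)).
  assert (Hmu4 : mu <= 1 / 4) by apply Rmin_l.
  assert (Hmu9 : mu <= 9 - 27 * a + b) by apply Rmin_r.
  destruct (Rlt_or_le a 0) as [Hneg|Hnonneg].
  - assert (0 <= x ^ 2 + x * y + y ^ 2) by nra.
    assert ((6 * a - 2) * (x + y) >= - (2 - 6 * a) * 2) by nra.
    unfold fstar_pi_dq; nra.
  - (* Up to nonnegative corrections, the quotient averages the linear
       interpolations, at [x] and at [y], between its diagonal values
       [9 - 27a + b] at [(-1,-1)] and [1 - 3a + b] at [(1,1)]. *)
    assert (Hdecomp : fstar_pi_dq a b x y =
      ((1 - x) / 2 * (9 - 27 * a + b) + (1 + x) / 2 * (1 - 3 * a + b) + 3 * a * (1 - x ^ 2)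
     + (1 - y) / 2 * (9 - 27 * a + b) + (1 + y) / 2 * (1 - 3 * a + b) + 3 * a * (1 - y ^ 2)) / 2
     + a * (x - y) ^ 2 / 2) by (unfold fstar_pi_dq; field).
    rewrite Hdecomp.
    assert ((1 - x) / 2 * (9 - 27 * a + b) + (1 + x) / 2 * (1 - 3 * a + b) >= mu) by nra.
    assert ((1 - y) / 2 * (9 - 27 * a + b) + (1 + y) / 2 * (1 - 3 * a + b) >= mu) by nra.
    assert (0 <= 3 * a * (1 - x ^ 2)) by (apply Rmult_le_pos; nra).
    assert (0 <= 3 * a * (1 - y ^ 2)) by (apply Rmult_le_pos; nra).
    assert (0 <= a * (x - y) ^ 2) by (apply Rmult_le_pos; [lra | apply pow2_ge_0]).
    lra.
Qed.

Lemma exists_fstar_pi_root (a b : R) :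
  standing a b -> a < 1 / 4 -> exists w0, 0 < w0 < 1 /\ fstar_pi a b w0 = 0.
Proof.
  intros [_ [H1 _]] Ha.
  assert (Hcont : continuity (fstar_pi a b)) by (unfold fstar_pi; reg).
  assert (Hneg0 : fstar_pi a b 0 < 0) by (unfold fstar_pi; simpl; lra).
  assert (Hpos1 : 0 < fstar_pi a b 1) by (unfold fstar_pi; simpl; lra).
  destruct (IVT (fstar_pi a b) 0 1 Hcont ltac:(lra) Hneg0 Hpos1)
    as [w0 [[[H0|E0] [H1'|E1]] Hroot]];
    [exists w0; auto | subst; lra ..].
Qed.

Definition fstar_rem (a x d : R) : R :=
  2 * (x - 2) * x + 2 - 4 * x + 4 * x * d
  - a * (6 * (x - 2) ^ 2 + 12 * (x - 2) * d + 8 * d ^ 2).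

Lemma fstar_split (a b x t : R) :
  fstar a b x t = fstar_pi a b x + (1 + cos t) * fstar_rem a x (1 + cos t).
Proof. unfold fstar, fstar_pi, fstar_rem; ring. Qed.

Lemma fstar_rem_bound (a x d : R) :
  -1 <= x <= 1 -> 0 <= d <= 2 -> Rabs (fstar_rem a x d) <= 20 + 158 * Rabs a.
Proof.
  intros Hx Hd; unfold fstar_rem.
  set (A := 2 * (x - 2) * x + 2 - 4 * x + 4 * x * d).
  set (B := 6 * (x - 2) ^ 2 + 12 * (x - 2) * d + 8 * d ^ 2).
  assert (HA : Rabs A <= 20) by (unfold A; apply Rabs_le; split; nra).
  assert (HB : Rabs B <= 158) by (unfold B; apply Rabs_le; split; nra).
  assert (HaB : Rabs a * Rabs B <= Rabs a * 158)
    by (apply Rmult_le_compat_l; [apply Rabs_pos | exact HB]).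
  unfold Rminus; eapply Rle_trans; [apply Rabs_triang|].
  rewrite Rabs_Ropp, Rabs_mult; lra.
Qed.

Section RootLimit.

Variables (a b w0 : R) (w : R -> R).
Hypothesis Hstanding : standing a b.
Hypothesis Hselector : is_root_selector a b w.
Hypothesis Ha : a < 1 / 4.
Hypothesis Hw0 : -1 <= w0 <= 1.
Hypothesis Hroot : fstar_pi a b w0 = 0.

Lemma root_selector_dist (t : R) : PI / 2 < t < PI ->
  Rmin (1 / 4) (9 - 27 * a + b) * Rabs (w t - w0)
  <= (1 + cos t) * (20 + 158 * Rabs a).
Proof.
  intros Ht.
  destruct (Hselector t Ht) as [Hwt Hf].
  pose proof (COS_bound t) as Hcos.
  assert (Hdq : Rmin (1 / 4) (9 - 27 * a + b) <= fstar_pi_dq a b (w t) w0)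
    by (apply fstar_pi_dq_lower_bound; auto; lra).
  assert (Hrem : Rabs (fstar_rem a (w t) (1 + cos t)) <= 20 + 158 * Rabs a)
    by (apply fstar_rem_bound; lra).
  assert (Hdiff : (w t - w0) * fstar_pi_dq a b (w t) w0
                  = - ((1 + cos t) * fstar_rem a (w t) (1 + cos t))).
  { rewrite <- fstar_pi_sub, Hroot; rewrite fstar_split in Hf; lra. }
  assert (Habs : Rabs ((w t - w0) * fstar_pi_dq a b (w t) w0)
                 <= (1 + cos t) * (20 + 158 * Rabs a)).
  { rewrite Hdiff, Rabs_Ropp, Rabs_mult, (Rabs_right (1 + cos t)) by lra.
    apply Rmult_le_compat_l; lra. }
  assert (Hmu : 0 < Rmin (1 / 4) (9 - 27 * a + b))
    by (destruct Hstanding as [_ [_ [H9 _]]]; apply Rmin_glb_lt; lra).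
  rewrite Rabs_mult, (Rabs_right (fstar_pi_dq a b (w t) w0)) in Habs by lra.
  pose proof (Rabs_pos (w t - w0)); nra.
Qed.

Lemma root_selector_limit : limit1_in w (fun t => PI / 2 < t < PI) w0 PI.
Proof.
  destruct Hstanding as [_ [_ [H9 _]]].
  set (mu := Rmin (1 / 4) (9 - 27 * a + b)).
  set (K := 20 + 158 * Rabs a).
  assert (Hmu : 0 < mu) by (apply Rmin_glb_lt; lra).
  assert (HK : 0 < K) by (unfold K; pose proof (Rabs_pos a); lra).
  intros eps Heps.
  destruct (continuity_cos PI (eps * mu / K)) as [delta [Hdelta Hnear]].
  { apply Rdiv_lt_0_compat; [apply Rmult_lt_0_compat|]; lra. }
  exists delta; split; [exact Hdelta|].
  intros t [Ht Hdist]; simpl in *.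
  assert (Hcos : R_dist (cos t) (cos PI) < eps * mu / K)
    by (apply Hnear; split; [split; [exact I | lra] | exact Hdist]).
  rewrite cos_PI in Hcos; unfold R_dist in *.
  apply Rabs_def2 in Hcos.
  assert (Hsmall : (1 + cos t) * K < eps * mu).
  { apply (Rmult_lt_reg_r (/ K)); [apply Rinv_0_lt_compat; lra|].
    rewrite Rmult_assoc, Rinv_r by lra; unfold Rdiv in Hcos; lra. }
  pose proof (root_selector_dist t Ht) as Hclose; fold mu K in Hclose.
  pose proof (Rabs_pos (w t - w0)); nra.
Qed.

End RootLimit.

Lemma g_cheb2 (w : R -> R) (m : nat) (t : R) : 0 < t < PI ->
  g w m t = (1 / w t - cos t) * cheb2 m (cos t) - cos (INR (m + 1) * t) + w t ^ (m + 1).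
Proof.
  intros Ht; unfold g.
  assert (Hsin : 0 < sin t) by (apply sin_gt_0; lra).
  assert (Hpow : 1 / (1 / w t) ^ (m + 1) = w t ^ (m + 1))
    by (unfold Rdiv; rewrite !Rmult_1_l, pow_inv, Rinv_inv; reflexivity).
  rewrite sin_INR_mul_cheb2, Hpow; set (zeta := 1 / w t); field; lra.
Qed.

Lemma g_limit (w : R -> R) (m : nat) (w0 : R) (D : R -> Prop) :
  (forall t, D t -> 0 < t < PI) -> w0 <> 0 -> limit1_in w D w0 PI ->
  limit1_in (g w m) D ((-1) ^ m * ((1 / w0 + 1) * INR (m + 1) + 1) + w0 ^ (m + 1)) PI.
Proof.
  intros HD Hw0 Hlimw.
  assert (Hlimcos : limit1_in cos D (-1) PI).
  { rewrite <- cos_PI; apply (limit1_comp_continuity cos (fun x => x)).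
    - apply continuity_cos.
    - apply lim_x. }
  replace ((-1) ^ m * ((1 / w0 + 1) * INR (m + 1) + 1) + w0 ^ (m + 1))
    with ((1 / w0 - (-1)) * cheb2 m (-1) - cos (INR (m + 1) * PI) + w0 ^ (m + 1))
    by (rewrite cheb2_m1, cos_INR_mul_PI, pow_add; simpl; ring).
  apply (limit1_ext
           (fun t => (1 / w t - cos t) * cheb2 m (cos t)
                     - cos (INR (m + 1) * t) + w t ^ (m + 1)));
    [intros t Ht; symmetry; apply g_cheb2, HD, Ht|].
  apply limit_plus; [apply limit_minus; [apply limit_mul; [apply limit_minus|]|]|].
  - apply (limit1_comp_continuity (fun x => 1 / x) w); [reg; exact Hw0 | exact Hlimw].
  - exact Hlimcos.
  - apply (limit1_comp_continuity (cheb2 m) cos); [apply continuity_cheb2 | exact Hlimcos].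
  - apply (limit1_comp_continuity (fun x => cos (INR (m + 1) * x)) (fun x => x));
      [reg | apply lim_x].
  - apply (limit1_comp_continuity (fun x => x ^ (m + 1)) w); [reg | exact Hlimw].
Qed.

Lemma g_limit_sign (m : nat) (w0 : R) : 0 < w0 < 1 ->
  0 < (-1) ^ m * ((-1) ^ m * ((1 / w0 + 1) * INR (m + 1) + 1) + w0 ^ (m + 1)).
Proof.
  intros Hw0.
  set (s := (-1) ^ m).
  assert (Hss : s * s = 1)
    by (unfold s; rewrite <- Rpow_mult_distr; replace (-1 * -1) with 1 by ring; apply pow1).
  assert (Hpow : 0 <= w0 ^ (m + 1) < 1) by (apply pow_lt_1_compat; [lra | lia]).
  assert (Hsw : Rabs (s * w0 ^ (m + 1)) < 1).
  { rewrite Rabs_mult; unfold s; rewrite pow_1_abs, Rabs_right by lra; lra. }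
  apply Rabs_def2 in Hsw.
  assert (Hinv : 1 < 1 / w0).
  { unfold Rdiv; rewrite Rmult_1_l, <- Rinv_1; apply Rinv_lt_contravar; lra. }
  assert (Hm : 0 < INR (m + 1)) by (apply lt_0_INR; lia).
  replace (s * (s * ((1 / w0 + 1) * INR (m + 1) + 1) + w0 ^ (m + 1)))
    with (s * s * ((1 / w0 + 1) * INR (m + 1) + 1) + s * w0 ^ (m + 1)) by ring.
  rewrite Hss; nra.
Qed.

Theorem mainTheorem19 (a b : R) (w : R -> R) (m : nat) :
  standing a b ->
  is_root_selector a b w ->
  a < 1 / 4 ->
  exists L : R,
    limit1_in (g w m) (fun theta => PI / 2 < theta < PI) L PI /\
    0 < (-1) ^ m * L.
Proof.
  intros Hstanding Hselector Ha.
  destruct (exists_fstar_pi_root a b Hstanding Ha) as [w0 [Hw0 Hroot]].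
  exists ((-1) ^ m * ((1 / w0 + 1) * INR (m + 1) + 1) + w0 ^ (m + 1)).
  split.
  - apply g_limit; [intros t Ht; pose proof PI2_RGT_0; lra | lra |].
    apply (root_selector_limit a b w0 w); auto; lra.
  - apply g_limit_sign, Hw0.
Qed.
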